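(* Let $p$ be an odd prime, $\mathcal O$ the ring of integers of a finite extension of $\mathbb Q_p$, $g\ge0$ and $r\ge0$. Then (1) $\mathrm{Fil}^r(V_g(\mathcal O))$ is stable under the action of $S_0(p)$; (2) if $P\in\mathrm{Fil}^r(V_g(\mathcal O))$, then $P\big|\begin{pmatrix}1&a\\0&p\end{pmatrix}\in p^rV_g(\mathcal O)$ for every integer $a$.
   Context: $V_g(\mathcal O)$: homogeneous degree-$g$ polynomials in $X,Y$ over $\mathcal O$, with right action of integer matrices $(P|\gamma)(X,Y)=P(dX-cY,-bX+aY)$ for $\gamma=\begin{pmatrix}a&b\\c&d\end{pmatrix}$. $S_0(p)=\{\begin{pmatrix}a&b\\c&d\end{pmatrix}\in M_2(\mathbb Z):ad-bc\ne0,\ p\mid c,\ p\nmid a\}$. $\mathrm{Fil}^r(V_g(\mathcal O))=\{\sum_{j=0}^gb_jX^jY^{g-j}\in V_g(\mathcal O):p^{r-j}\mid b_j\text{ for }0\le j\le r-1\}$. *)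

From HB Require Import structures.
From mathcomp Require Import all_boot all_order all_algebra.
From mathcomp Require Import mpoly.
Set Implicit Arguments. Unset Strict Implicit. Unset Printing Implicit Defensive.
Import Order.TTheory GRing.Theory Num.Theory.
Local Open Scope ring_scope.

Definition i0 : 'I_2 := ord0.
Definition i1 : 'I_2 := ord_max.

(* Polynomials in X = 'X_i0, Y = 'X_i1 over O. *)

Definition mx2 (a b c d : int) : 'M[int]_2 :=
  \matrix_(i < 2, j < 2)
     (if i == i0 then (if j == i0 then a else b)
      else (if j == i0 then c else d)).

(* Right action (P | gamma)(X, Y) = P(dX - cY, -bX + aY) *)
Definition act (O : comNzRingType) (P : {mpoly O[2]}) (gam : 'M[int]_2)
  : {mpoly O[2]} :=
  P \mPo [tuple ((gam i1 i1)%:~R *: 'X_i0 - (gam i1 i0)%:~R *: 'X_i1);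
                (- ((gam i0 i1)%:~R *: 'X_i0) + (gam i0 i0)%:~R *: 'X_i1)].

Definition Vg (O : comNzRingType) (g : nat) (P : {mpoly O[2]}) : Prop :=
  P \is g.-homog.

Definition S0 (p : nat) (gam : 'M[int]_2) : Prop :=
  \det gam != 0 /\ (p%:Z %| gam i1 i0)%Z /\ ~~ (p%:Z %| gam i0 i0)%Z.

Definition dvdO (O : comNzRingType) (x y : O) : Prop := exists u : O, y = x * u.

Definition bcoef (O : comNzRingType) (g j : nat) (P : {mpoly O[2]}) : O :=
  P@_[multinom [tuple j; (g - j)%N]].

Definition Fil (O : comNzRingType) (p r g : nat) (P : {mpoly O[2]}) : Prop :=
  Vg g P /\
  forall j : nat, (j < r)%N -> dvdO ((p%:R : O) ^+ (r - j)) (bcoef g j P).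

Definition pVg (O : comNzRingType) (p r g : nat) (P : {mpoly O[2]}) : Prop :=
  exists Q : {mpoly O[2]}, Vg g Q /\ P = (p%:R : O) ^+ r *: Q.

From HB Require Import structures.
From mathcomp Require Import all_boot all_order all_algebra.
From mathcomp Require Import mpoly.
From mathcomp Require Import zify.
Set Implicit Arguments. Unset Strict Implicit. Unset Printing Implicit Defensive.
Import Order.TTheory GRing.Theory Num.Theory.
Local Open Scope ring_scope.

(* The coefficient condition defining Fil^r says: the coefficient of a monomial
   of X-degree j is divisible by p^(r-j) (truncated subtraction).  Read on all
   monomials, this is a multiplicative filtration of the polynomial ring, in
   which X has level 1, Y level 0, and p raises the level by 1.  An element of
   S_0(p) sends X to dX - cY with p | c, which has level 1, and Y to something
   of level 0, so substitution preserves the level r of P.  For the matrix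
   [[1,a],[0,p]], X goes to pX, so the coefficient of each monomial of X-degree
   j of P is multiplied by p^j, and p^(r-j) p^j is divisible by p^r. *)

Section Divisibility.
Variable O : comNzRingType.
Implicit Types x y z w : O.

Lemma dvdO0 x : dvdO x 0.
Proof. by exists 0; rewrite mulr0. Qed.

Lemma dvd1O x : dvdO 1 x.
Proof. by exists x; rewrite mul1r. Qed.

Lemma dvdOD x y z : dvdO x y -> dvdO x z -> dvdO x (y + z).
Proof. by move=> [u ->] [v ->]; exists (u + v); rewrite mulrDr. Qed.

Lemma dvdO_mul x y z w : dvdO x y -> dvdO z w -> dvdO (x * z) (y * w).
Proof. by move=> [u ->] [v ->]; exists (u * v); rewrite mulrACA. Qed.

Lemma dvdO_trans x y z : dvdO x y -> dvdO y z -> dvdO x z.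
Proof. by move=> [u ->] [v ->]; exists (u * v); rewrite mulrA. Qed.

Lemma dvdO_exp x a b : (a <= b)%N -> dvdO (x ^+ a) (x ^+ b).
Proof. by move=> leab; exists (x ^+ (b - a)); rewrite -exprD subnKC. Qed.

End Divisibility.

Lemma dvdO_intr (O : comNzRingType) (p : nat) (c : int) :
  (p%:Z %| c)%Z -> dvdO (p%:R : O) c%:~R.
Proof. by move=> /dvdzP [c' ->]; exists c'%:~R; rewrite intrM mulrC. Qed.

Section Filtration.
Variables (O : comNzRingType) (n : nat) (i : 'I_n) (x : O).
Implicit Types Q R : {mpoly O[n]}.

Definition filtered (l : nat) Q :=
  forall m : 'X_{1..n}, dvdO (x ^+ (l - m i)) Q@_m.

Lemma filtered_le l l' Q : (l' <= l)%N -> filtered l Q -> filtered l' Q.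
Proof. by move=> le_l FQ m; apply: dvdO_trans _ (FQ m); apply/dvdO_exp/leq_sub2r. Qed.

Lemma filtered0 Q : filtered 0 Q.
Proof. by move=> m; rewrite sub0n expr0; apply: dvd1O. Qed.

Lemma filtered_mpoly0 l : filtered l 0.
Proof. by move=> m; rewrite mcoeff0; apply: dvdO0. Qed.

Lemma filteredD l Q R : filtered l Q -> filtered l R -> filtered l (Q + R).
Proof. by move=> FQ FR m; rewrite mcoeffD; apply: dvdOD. Qed.

Lemma filtered_sum l (I : eqType) (s : seq I) (F : I -> {mpoly O[n]}) :
  (forall k, k \in s -> filtered l (F k)) -> filtered l (\sum_(k <- s) F k).
Proof.
move=> FF; rewrite big_seq.
exact: (big_ind (filtered l) (filtered_mpoly0 l) (@filteredD l)).
Qed.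

Lemma filteredZ l s c Q :
  dvdO (x ^+ s) c -> filtered l Q -> filtered (l + s) (c *: Q).
Proof.
move=> dvd_c FQ m; rewrite mcoeffZ.
apply: dvdO_trans _ (dvdO_mul dvd_c (FQ m)); rewrite -exprD.
by apply: dvdO_exp; lia.
Qed.

Lemma filteredN l Q : filtered l Q -> filtered l (- Q).
Proof.
by move=> FQ; rewrite -scaleN1r -[l]addn0; apply: filteredZ FQ; rewrite expr0; apply: dvd1O.
Qed.

Lemma filteredM l l' Q R :
  filtered l Q -> filtered l' R -> filtered (l + l') (Q * R).
Proof.
move=> FQ FR m; rewrite mcoeffM.
apply: (big_ind (dvdO _)); [exact: dvdO0 | exact: dvdOD |].
move=> k /eqP m_eq; apply: dvdO_trans _ (dvdO_mul (FQ k.1) (FR k.2)).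
have := congr1 (fun m' : 'X_{1..n} => m' i) m_eq; rewrite /= mnmDE => m_i.
by rewrite -exprD; apply: dvdO_exp; lia.
Qed.

Lemma filtered_exp l e Q : filtered l Q -> filtered (l * e) (Q ^+ e).
Proof.
move=> FQ; elim: e => [|e IH]; first by rewrite muln0; apply: filtered0.
by rewrite exprS mulnS; apply: filteredM.
Qed.

Lemma filteredX : filtered 1 'X_i.
Proof.
move=> m; rewrite mcoeffX; have [<-|_] := eqP; last exact: dvdO0.
by rewrite mnm1E eqxx subnn; apply: dvd1O.
Qed.

End Filtration.

Lemma comp_mpoly_dhomog (R : comNzRingType) (n k d : nat) (P : {mpoly R[n]})
    (lq : n.-tuple {mpoly R[k]}) :
  (forall j, tnth lq j \is 1.-homog) -> P \is d.-homog -> P \mPo lq \is d.-homog.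
Proof.
move=> hom_lq homP; rewrite comp_mpolyEX big_seq.
apply: (big_ind (fun Q => Q \is d.-homog)); [exact: dhomog0 | exact: dhomogD |].
move=> m mP; apply: dhomogZ; rewrite comp_mpolyX -(dhomog_mf homP mP) /= mdegE.
apply: (big_rec2 (fun e Q => Q \is e.-homog)) => [|j e Q _ homQ]; first exact: dhomog1.
by have := dhomogM (dhomogMn (m j) (hom_lq j)) homQ; rewrite mul1n.
Qed.

Section TwoVariables.
Variable O : comNzRingType.
Implicit Types (P : {mpoly O[2]}) (gam : 'M[int]_2).

Lemma mdeg2 (m : 'X_{1..2}) : mdeg m = (m i0 + m i1)%N.
Proof. by rewrite mdegE big_ord_recl big_ord1; congr (_ + m _)%N; apply/val_inj. Qed.

Lemma multinom2_eta (m : 'X_{1..2}) : m = [multinom [tuple m i0; m i1]].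
Proof. by apply/mnmP => -[[|[|//]] lti]; rewrite multinomE; congr (m _); apply/val_inj. Qed.

Lemma Fil_filtered p r g P :
  Fil p r g P <-> Vg g P /\ filtered i0 (p%:R : O) r P.
Proof.
split=> -[homP FP]; split=> //.
  move=> m; have [mP|/memN_msupp_eq0 ->] := boolP (m \in msupp P); last exact: dvdO0.
  have [ltmr|lerm] := ltnP (m i0) r; last first.
    by rewrite (_ : r - m i0 = 0)%N; [apply: dvd1O | lia].
  have := FP _ ltmr; rewrite /bcoef -(dhomog_mf homP mP) /= mdeg2 addKn.
  by rewrite -multinom2_eta.
by move=> j ltjr; have := FP [multinom [tuple j; (g - j)%N]]; rewrite multinomE.
Qed.

Definition actX gam : {mpoly O[2]} :=
  (gam i1 i1)%:~R *: 'X_i0 - (gam i1 i0)%:~R *: 'X_i1.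
Definition actY gam : {mpoly O[2]} :=
  - ((gam i0 i1)%:~R *: 'X_i0) + (gam i0 i0)%:~R *: 'X_i1.

Lemma actE P gam :
  act P gam = \sum_(m <- msupp P) P@_m *: (actX gam ^+ m i0 * actY gam ^+ m i1).
Proof.
rewrite /act comp_mpolyEX; apply: eq_bigr => m _.
by rewrite comp_mpolyX big_ord_recl big_ord1; congr (_ *: (_ * tnth _ _ ^+ m _));
  apply/val_inj.
Qed.

Lemma linear_form_homog (a b : O) : a *: 'X_i0 + b *: 'X_i1 \is 1.-homog.
Proof. by apply: dhomogD; apply: dhomogZ; rewrite dhomogX /= mdeg1. Qed.

Lemma actX_homog gam : actX gam \is 1.-homog.
Proof. by rewrite /actX -scaleNr; apply: linear_form_homog. Qed.

Lemma actY_homog gam : actY gam \is 1.-homog.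
Proof. by rewrite /actY -scaleNr; apply: linear_form_homog. Qed.

Lemma act_homog g P gam : Vg g P -> Vg g (act P gam).
Proof.
apply: comp_mpoly_dhomog => -[[|[|//]] ltj2]; rewrite (tnth_nth 0) /=.
  exact: actX_homog.
exact: actY_homog.
Qed.

Lemma filtered_actX p gam :
  (p%:Z %| gam i1 i0)%Z -> filtered i0 (p%:R : O) 1 (actX gam).
Proof.
move=> p_c; apply: filteredD.
  by apply: (filteredZ (l := 1) (s := 0)) (filteredX _ _); rewrite expr0; apply: dvd1O.
by apply/filteredN; apply: (filteredZ (l := 0) (s := 1)) (filtered0 _ _ _); apply: dvdO_intr.
Qed.

Lemma Fil_act_S0 p r g P gam : S0 p gam -> Fil p r g P -> Fil p r g (act P gam).
Proof.
move=> [_ [p_c _]] /Fil_filtered [homP FP]; apply/Fil_filtered.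
split; first exact: act_homog.
rewrite actE; apply: filtered_sum => m _.
apply: (filtered_le (l := m i0 + 0 + (r - m i0))); first lia.
apply: filteredZ (FP m) _; apply: filteredM (filtered0 _ _ _).
by have := filtered_exp (m i0) (filtered_actX p_c); rewrite mul1n.
Qed.

Lemma pVg0 p r g : pVg p r g (0 : {mpoly O[2]}).
Proof. by exists 0; rewrite scaler0; split=> //; apply: dhomog0. Qed.

Lemma pVgD p r g (Q R : {mpoly O[2]}) :
  pVg p r g Q -> pVg p r g R -> pVg p r g (Q + R).
Proof.
move=> [Q' [homQ ->]] [R' [homR ->]]; exists (Q' + R').
by rewrite scalerDr; split=> //; apply: dhomogD.
Qed.

Lemma pVgZ p r g c (Q : {mpoly O[2]}) :
  dvdO ((p%:R : O) ^+ r) c -> Vg g Q -> pVg p r g (c *: Q).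
Proof.
by move=> [u ->] homQ; exists (u *: Q); rewrite scalerA; split=> //; apply: dhomogZ.
Qed.

Lemma actX_upper (a : int) (p : nat) : actX (mx2 1 a 0 p) = p%:R *: 'X_i0.
Proof. by rewrite /actX /mx2 !mxE /= scale0r subr0. Qed.

Lemma act_upper_pVg p r g P (a : int) :
  Fil p r g P -> pVg p r g (act P (mx2 1 a 0 p)).
Proof.
move=> /Fil_filtered [homP FP]; rewrite actE big_seq.
apply: (big_ind (pVg p r g)); [exact: pVg0 | exact: pVgD | move=> m mP].
rewrite actX_upper exprZn -scalerAl scalerA; apply: pVgZ.
  apply: dvdO_trans _ (dvdO_mul (FP m) (dvdO_exp _ (leqnn (m i0)))).
  by rewrite -exprD; apply: dvdO_exp; lia.
have homX : ('X_i0 : {mpoly O[2]}) \is 1.-homog by rewrite dhomogX /= mdeg1.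
have := dhomogM (dhomogMn (m i0) homX) (dhomogMn (m i1) (actY_homog (mx2 1 a 0 p))).
have <- : (m i0 + m i1 = g)%N by rewrite -mdeg2 -(dhomog_mf homP mP).
by rewrite !mul1n; apply.
Qed.

End TwoVariables.

Theorem lemma6p4 (O : comNzRingType) (p g r : nat) :
  prime p -> odd p ->
  (forall (P : {mpoly O[2]}) (gam : 'M[int]_2),
      Fil p r g P -> S0 p gam -> Fil p r g (act P gam)) /\
  (forall (P : {mpoly O[2]}) (a : int),
      Fil p r g P -> pVg p r g (act P (mx2 1 a 0 p%:Z))).
Proof.
move=> _ _; split=> [P gam FP S0gam | P a]; first exact: Fil_act_S0.
exact: act_upper_pVg.
Qed.
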